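(* Let $\mathcal G$ be a strongly connected directed graph with no self loops, vertex set $\mathcal V=\{1,\dots,n\}$ and edge set $\mathcal E=\{1,\dots,m\}$. Let $B=S-D$ be its incidence matrix, let $Q=DB^\mathsf{T}$, and let $W$ and $Q^\ddagger$ be as in the context. Let $\omega^{\mathrm u}\in\mathbb{R}^n$ be constant. Consider the dynamics \[ \dot{\tilde\theta}(t)=\omega^{\mathrm u}+c(t),\qquad \tilde\beta(t)=B^\mathsf{T}\tilde\theta(t),\qquad y(t)=D\tilde\beta(t). \] Let $\mathcal T$ be an outward directed spanning tree with root $r$, and let $g_1,\dots,g_{n-1}$ be an ordering of its edges such that $g_a\prec g_b$ implies $a<b$. Let $k,k_2>0$. Let $0<t_1<\dots<t_n$ satisfy $t_{j+1}-t_j>|\tilde\beta_{g_j}(t_j)|/k_2$ for each $j$. For each $i\neq r$, let $j(i)$ be the unique index with $\mathrm{dst}(g_{j(i)})=i$. Let the control be \[ c_i(t)=\begin{cases} k\,y_i(t) & t<t_1,\\ k\,y_i(t_1)+k_2\,\mathrm{sign}\big(\tilde\beta_{g_{j(i)}}(t)\big) & i\neq r,\ t_{j(i)}\le t<t_{j(i)+1},\\ k\,y_i(t_1) & \text{otherwise.}\end{cases} \] Assume \[ \tilde\beta(t_1)=-k^{-1}B^\mathsf{T}Q^\ddagger\omega^{\mathrm u} \qquad\text{and}\qquad \omega^{\mathrm u}+k\,y(t_1)=W\omega^{\mathrm u}. \] Then for all $j=1,\dots,n-1$, \[ \tilde\beta(t_{j+1})=(I+B^\mathsf{T}DE^{g_j})\,\tilde\beta(t_j)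 \qquad\text{and}\qquad \tilde\beta_{g_j}(t_{j+1})=0. \]
   Context: The matrices $S,D\in\mathbb{R}^{n\times m}$ are defined by $S_{ie}=1$ if node $i$ is the source of edge $e$ and $0$ otherwise, and $D_{ie}=1$ if node $i$ is the destination of edge $e$ and $0$ otherwise. The vector $\mathbf{1}$ is the all-ones vector. The matrix $Q=DB^\mathsf{T}$ is an irreducible rate matrix. Let $z>0$ satisfy $z^\mathsf{T}Q=0$ and $\mathbf{1}^\mathsf{T}z=1$, and set $W=\mathbf{1}z^\mathsf{T}$. Write $Q=T\begin{bmatrix}0&0\\0&\Lambda\end{bmatrix}T^{-1}$, where $T$ is invertible with first column $\mathbf{1}$, the first row of $T^{-1}$ is $z^\mathsf{T}$, and $\Lambda$ is invertible. Define $Q^\ddagger=T\begin{bmatrix}0&0\\0&\Lambda^{-1}\end{bmatrix}T^{-1}$. An outward directed spanning tree with root $r$ is a set $\mathcal T$ of $n-1$ edges such that every vertex is reachable from $r$ by a directed path in $\mathcal T$, and each vertex other than $r$ is the destination of exactly one edge of $\mathcal T$. For $f,g\in\mathcal T$, $f\prec g$ means there is a directed walk of nonzero length in $\mathcal T$ from $\mathrm{dst}(f)$ to $\mathrm{dst}(g)$. $E^g\in\mathbb{R}^{m\times m}$ is zero except $E^g_{gg}=1$. The convention $\mathrm{sign}(0)=0$ is used. *)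

From HB Require Import structures.
From mathcomp Require Import all_boot all_order all_algebra.
From mathcomp Require Import boolp classical_sets reals topology normedtype derive.
Set Implicit Arguments. Unset Strict Implicit. Unset Printing Implicit Defensive.
Import Order.TTheory GRing.Theory Num.Theory.
Import numFieldNormedType.Exports.
Local Open Scope ring_scope.

Section Graph.
Variables (n m : nat) (src dst : 'I_m -> 'I_n).

Definition no_self_loops : Prop := forall e, src e != dst e.

Definition adj : rel 'I_n := fun i j => [exists e, (src e == i) && (dst e == j)].

Definition strongly_connected : Prop := forall i j, connect adj i j.

Definition tree_adj (T : {set 'I_m}) : rel 'I_n :=
  fun u v => [exists e in T, (src e == u) && (dst e == v)].

Definition outward_spanning_tree (T : {set 'I_m}) (r : 'I_n) : Prop :=
  [/\ #|T| = n.-1,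
      (forall v, connect (tree_adj T) r v) &
      (forall v, v != r -> #|[set e in T | dst e == v]| = 1)].

Definition tree_prec (T : {set 'I_m}) (f g : 'I_m) : bool :=
  [exists v, tree_adj T (dst f) v && connect (tree_adj T) v (dst g)].
End Graph.

Section Matrices.
Variables (R : nzRingType) (n m : nat) (src dst : 'I_m -> 'I_n).
Definition Smx : 'M[R]_(n, m) := \matrix_(i, e) (src e == i)%:R.
Definition Dmx : 'M[R]_(n, m) := \matrix_(i, e) (dst e == i)%:R.
Definition Bmx : 'M[R]_(n, m) := Smx - Dmx.
Definition Qmx : 'M[R]_n := Dmx *m Bmx^T.
End Matrices.

Definition Emx (R : nzRingType) (m : nat) (g : 'I_m) : 'M[R]_m := delta_mx g g.

Definition Wmx (R : nzRingType) (n : nat) (z : 'cV[R]_n) : 'M[R]_n :=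
  const_mx 1 *m z^T.

Definition is_Qddagger (R : fieldType) (p : nat) (z : 'cV[R]_(1 + p))
    (Q Qdd : 'M[R]_(1 + p)) : Prop :=
  exists (T : 'M[R]_(1 + p)) (L : 'M[R]_p),
    [/\ T \in unitmx, col ord0 T = const_mx 1, row ord0 (invmx T) = z^T,
        L \in unitmx &
        Q = T *m block_mx 0 0 0 L *m invmx T] /\
    Qdd = T *m block_mx 0 0 0 (invmx L) *m invmx T.

Section Dynamics.
Variables (R : realType) (p m : nat) (src dst : 'I_m -> 'I_p.+1).

Definition betat (theta : R -> 'cV[R]_p.+1) (s : R) : 'cV[R]_m :=
  (Bmx R src dst)^T *m theta s.
Definition yt (theta : R -> 'cV[R]_p.+1) (s : R) : 'cV[R]_p.+1 :=
  Dmx R dst *m betat theta s.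

(* times t_1 < ... < t_n are t ord0, ..., t ord_max; for j : 'I_p (paper index j+1)
   tj t j = t_{j+1} (paper), tnext t j = t_{j+2} (paper). *)
Definition tj (t : 'I_p.+1 -> R) (j : 'I_p) : R := t (widen_ord (leqnSn p) j).
Definition tnext (t : 'I_p.+1 -> R) (j : 'I_p) : R := t (lift ord0 j).

Definition control (k k2 : R) (r : 'I_p.+1) (g : 'I_p -> 'I_m)
    (t : 'I_p.+1 -> R) (theta : R -> 'cV[R]_p.+1) (s : R) : 'cV[R]_p.+1 :=
  \col_i
   (if s < t ord0 then k * yt theta s i ord0
    else match [pick j | dst (g j) == i] with
         | Some j =>
             if (i != r) && (tj t j <= s) && (s < tnext t j)
             then k * yt theta (t ord0) i ord0
                  + k2 * Num.sg (betat theta s (g j) ord0)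
             else k * yt theta (t ord0) i ord0
         | None => k * yt theta (t ord0) i ord0
         end).

(* theta solves  d/dt theta = omega + c(t)  for t > 0: theta is continuous,
   and differentiable with the prescribed derivative except at finitely many
   times (the right-hand side is discontinuous). *)
Definition solves (omega : 'cV[R]_p.+1) (c : R -> 'cV[R]_p.+1)
    (theta : R -> 'cV[R]_p.+1) : Prop :=
  (forall s : R, 0 < s -> forall i, {for s, continuous (fun u : R => theta u i ord0)}) /\
  exists F : seq R, forall s : R, 0 < s -> s \notin F -> forall i,
      is_derive s 1 (fun u => theta u i ord0) (omega i ord0 + c s i ord0).
End Dynamics.

From HB Require Import structures.
From mathcomp Require Import all_boot all_order all_algebra.
From mathcomp Require Import boolp classical_sets reals topology normedtype derive.
From mathcomp Require Import ring lra.
Set Implicit Arguments. Unset Strict Implicit. Unset Printing Implicit Defensive.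
Import Order.TTheory GRing.Theory Num.Theory.
Import numFieldNormedType.Exports.
Local Open Scope ring_scope.

(** On [[t_j, t_(j+1)[] the control adds a sign term only at the node
    [i = dst g_j], and [omega + k y(t_1) = W omega] is a constant vector, so all
    nodes drift at a common rate [c0].  Hence every node other than [i] is merely
    translated by [c0 (t_(j+1) - t_j)], while the edge difference
    [beta_(g_j) = theta_(src g_j) - theta_i] obeys [beta' = - k2 sg beta]: it
    reaches [0] within time [|beta(t_j)|/k2] and stays there, since [beta^2] is
    nonincreasing.  Applying [B^T], which kills constant vectors, turns the
    resulting jump [beta_(g_j)(t_j) e_i] of [theta] into [B^T D E^(g_j) beta(t_j)].
    Since [theta] is only piecewise differentiable, the calculus is done for
    functions differentiable off a finite set of times. *)

Section DeriveOffFiniteSet.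
Variable R : realType.
Local Open Scope classical_set_scope.
Local Open Scope ring_scope.
Implicit Types (h f d : R -> R) (F : seq R) (a b c k : R).

Lemma within_itv_continuous h a b :
  (forall s, s \in `[a, b] -> {for s, continuous h}) ->
  {within `[a, b], continuous h}.
Proof. by move=> hc; apply: continuous_in_subspaceT => s; rewrite inE; apply: hc. Qed.

Lemma ler0_derive_off_seq_le h d F a b : a <= b ->
  (forall s, s \in `[a, b] -> {for s, continuous h}) ->
  (forall s, s \in `]a, b[ -> s \notin F -> is_derive s 1 h (d s)) ->
  (forall s, s \in `]a, b[ -> s \notin F -> d s <= 0) ->
  h b <= h a.
Proof.
elim: F a b => [|x F IH] a b ab hc hd dle0.
  case: (ltgtP a b) ab => // [{}ab _|-> //].
  have [s sab hE] := MVT ab (fun s sab => hd s sab isT) (within_itv_continuous hc).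
  by rewrite -subr_le0 hE mulr_le0_ge0 ?dle0 // subr_ge0 ltW.
have notin_cons s : s != x -> s \notin F -> s \notin x :: F.
  by move=> sx sF; rewrite in_cons negb_or sx.
have [/andP [ax xb]|xab] := boolP (a < x < b); last first.
  have sx s : s \in `]a, b[ -> s != x.
    by move=> sab; apply: contraNneq xab => <-; rewrite in_itv in sab.
  apply: IH => // s sab sF.
    exact: hd sab (notin_cons s (sx s sab) sF).
  exact: dle0 sab (notin_cons s (sx s sab) sF).
have sub_lo s : s \in `]a, x[ -> s \in `]a, b[.
  by rewrite !in_itv /= => /andP [-> /lt_trans ->].
have sub_hi s : s \in `]x, b[ -> s \in `]a, b[.
  by rewrite !in_itv /= => /andP [/(lt_trans ax) -> ->].
have hxb : h b <= h x.
  apply (IH x b (ltW xb)) => [s|s sxb sF|s sxb sF].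
  - rewrite in_itv /= => /andP [xs sb]; apply: hc.
    by rewrite in_itv /= sb (le_trans (ltW ax) xs).
  - by apply: hd (sub_hi s sxb) (notin_cons s _ sF); rewrite gt_eqF // (itvP sxb).
  - by apply: dle0 (sub_hi s sxb) (notin_cons s _ sF); rewrite gt_eqF // (itvP sxb).
have hax : h x <= h a.
  apply (IH a x (ltW ax)) => [s|s sax sF|s sax sF].
  - rewrite in_itv /= => /andP [as_ sx]; apply: hc.
    by rewrite in_itv /= as_ (le_trans sx (ltW xb)).
  - by apply: hd (sub_lo s sax) (notin_cons s _ sF); rewrite lt_eqF // (itvP sax).
  - by apply: dle0 (sub_lo s sax) (notin_cons s _ sF); rewrite lt_eqF // (itvP sax).
exact: le_trans hxb hax.
Qed.

Lemma derive_cst_off_seq_affine h c F a b : a <= b ->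
  (forall s, s \in `[a, b] -> {for s, continuous h}) ->
  (forall s, s \in `]a, b[ -> s \notin F -> is_derive s 1 h c) ->
  h b = h a + c * (b - a).
Proof.
move=> ab hc hd.
have lin (s : R) : is_derive s 1 (fun u : R => c * u) c.
  have := @is_deriveZ R R^o R^o id c s 1 1 (is_derive_id s 1).
  by rewrite /GRing.scale /= mulr1.
have lin_cont (s : R) : {for s, continuous (fun u : R => c * u)}.
  exact: continuousM (@cst_continuous _ _ c s) (@cvg_id _ _).
have le1 : h b - c * b <= h a - c * a.
  apply (ler0_derive_off_seq_le (h := fun u => h u - c * u) (d := fun=> 0) (F := F) ab)
    => [s sab|s sab sF|//].
    exact: continuousB (hc s sab) (lin_cont s).
  by rewrite -(subrr c); apply: is_deriveB (hd s sab sF) (lin s).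
have le2 : c * b - h b <= c * a - h a.
  apply (ler0_derive_off_seq_le (h := fun u => c * u - h u) (d := fun=> 0) (F := F) ab)
    => [s sab|s sab sF|//].
    exact: continuousB (lin_cont s) (hc s sab).
  by rewrite -(subrr c); apply: is_deriveB (lin s) (hd s sab sF).
by apply/eqP; rewrite eq_le; apply/andP; split; rewrite mulrBr; lra.
Qed.

Lemma sg_const_continuous_neq0 f a b :
  (forall s, s \in `[a, b] -> {for s, continuous f}) ->
  (forall s, s \in `[a, b] -> f s != 0) ->
  forall s, s \in `[a, b] -> Num.sg (f s) = Num.sg (f a).
Proof.
move=> fc fneq0 s sab; have := sab; rewrite in_itv /= => /andP [as_ sb].
have aab : a \in `[a, b] by rewrite in_itv /= lexx (le_trans as_ sb).
apply/eqP; apply: contraT => sg_neq.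
have [x xas fx0] : exists2 x, x \in `[a, s] & f x = 0.
  apply: IVT as_ _ _.
    apply: within_itv_continuous => x; rewrite !in_itv /= => /andP [ax xs].
    by apply: fc; rewrite in_itv /= ax (le_trans xs sb).
  move: sg_neq (fneq0 s sab) (fneq0 a aab).
  rewrite ge_min !le_max.
  by case: (sgrP (f a)) => fa; case: (sgrP (f s)) => fs; rewrite ?eqxx //= ?ltW.
have := xas; rewrite in_itv /= => /andP [ax xs].
by have := fneq0 x; rewrite fx0 eqxx in_itv /= ax (le_trans xs sb) => /(_ isT).
Qed.

Lemma sg_flow_vanishes f k F a b : 0 <= k -> a <= b ->
  (forall s, s \in `[a, b] -> {for s, continuous f}) ->
  (forall s, s \in `]a, b[ -> s \notin F -> is_derive s 1 f (- (k * Num.sg (f s)))) ->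
  `|f a| <= k * (b - a) -> f b = 0.
Proof.
move=> k_ge0 ab fc fd fa_le.
have bab : b \in `[a, b] by rewrite in_itv /= ab lexx.
have sq_le s : s \in `[a, b] -> f b * f b <= f s * f s.
  rewrite in_itv /= => /andP [as_ sb].
  have sub s' : s' \in `]s, b[ -> s' \in `]a, b[.
    by rewrite !in_itv /= => /andP [/(le_lt_trans as_) -> ->].
  pose df u := f u *: (- (k * Num.sg (f u))).
  apply (ler0_derive_off_seq_le (h := fun u => f u * f u) (d := fun u => df u + df u)
           (F := F) sb).
  - move=> x; rewrite in_itv /= => /andP [sx xb].
    by apply: continuousM; apply: fc; rewrite in_itv /= (le_trans as_ sx) xb.
  - by move=> x /sub xab xF; apply: is_deriveM; apply: fd.
  - move=> x _ _; rewrite /df /GRing.scale /=.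
    have : 0 <= f x * (k * Num.sg (f x)).
      by rewrite mulrCA [f x * _]mulrC -normrEsg mulr_ge0.
    lra.
(* If [f b != 0] then [f] never vanishes on [[a, b]] ([f^2] is nonincreasing), so
   it keeps the sign of [f a] and [|f|] decreases at rate [k]. *)
apply/eqP; apply: contraT => fb_neq0.
have fneq0 s : s \in `[a, b] -> f s != 0.
  move=> sab; apply: contra fb_neq0 => /eqP fs0.
  by have := sq_le s sab; rewrite fs0 mulr0 -expr2 -sqrf_eq0 eq_le sqr_ge0 andbT => ->.
have aab : a \in `[a, b] by rewrite in_itv /= ab lexx.
have oo_cc s : s \in `]a, b[ -> s \in `[a, b].
  by rewrite !in_itv /= => /andP [/ltW -> /ltW ->].
have sg_fa := sg_const_continuous_neq0 fc fneq0.
have fbE : f b = f a + - (k * Num.sg (f a)) * (b - a).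
  apply (derive_cst_off_seq_affine (F := F) ab fc) => s sab sF.
  by rewrite -(sg_fa s (oo_cc s sab)); apply: fd.
have sg_fa2 : Num.sg (f a) * Num.sg (f a) = 1.
  by case: (sgrP (f a)) (fneq0 a aab) => // _ _; rewrite ?mulr1 ?mulrNN ?mulr1.
have : `|f b| <= 0.
  rewrite normrEsg sg_fa // fbE mulNr mulrBr -normrEsg subr_le0.
  suff -> : Num.sg (f a) * (k * Num.sg (f a) * (b - a))
          = Num.sg (f a) * Num.sg (f a) * (k * (b - a)) by rewrite sg_fa2 mul1r.
  ring.
by rewrite normr_le0 (negbTE fb_neq0).
Qed.
End DeriveOffFiniteSet.

Section IncidenceMatrices.
Variables (R : nzRingType) (n m : nat) (src dst : 'I_m -> 'I_n).

Lemma trBmx_mulE l (x : 'M[R]_(n, l)) e c :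
  ((Bmx R src dst)^T *m x) e c = x (src e) c - x (dst e) c.
Proof.
have pick i0 : \sum_i (i0 == i)%:R * x i c = x i0 c.
  rewrite (bigD1 i0) //= eqxx mul1r big1 ?addr0 // => i /negPf.
  by rewrite eq_sym => ->; rewrite mul0r.
rewrite mxE; under eq_bigr do rewrite !mxE mulrBl.
by rewrite sumrB !pick.
Qed.

Lemma trBmx_mul_const l (c : R) : (Bmx R src dst)^T *m const_mx c = 0 :> 'M_(m, l).
Proof. by apply/matrixP => e j; rewrite trBmx_mulE !mxE subrr. Qed.

Lemma Dmx_mul_delta e : Dmx R dst *m delta_mx e 0 = delta_mx (dst e) (0 : 'I_1).
Proof. by rewrite -colE; apply/matrixP => i j; rewrite !mxE (ord1 j) eqxx andbT eq_sym. Qed.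

Lemma Wmx_mul (z v : 'cV[R]_n) : Wmx z *m v = const_mx ((z^T *m v) 0 0).
Proof.
by rewrite /Wmx -mulmxA; apply/matrixP => i j; rewrite (ord1 j) !mxE big_ord1 !mxE mul1r.
Qed.
End IncidenceMatrices.

Lemma Dmx_Emx_mul (R : comNzRingType) n m (dst : 'I_m -> 'I_n) (g : 'I_m) (v : 'cV[R]_m) :
  Dmx R dst *m (Emx R g *m v) = v g 0 *: delta_mx (dst g) 0.
Proof.
have Ev : Emx R g *m v = v g 0 *: delta_mx g 0.
  rewrite /Emx -(mul_delta_mx (0 : 'I_1) g g) -mulmxA -rowE [row g v]mx11_scalar.
  by rewrite mul_mx_scalar mxE.
by rewrite Ev -scalemxAr Dmx_mul_delta.
Qed.

Section OutwardSpanningTree.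
Variables (n m : nat) (src dst : 'I_m -> 'I_n) (T : {set 'I_m}) (r : 'I_n).
Hypothesis tree : outward_spanning_tree src dst T r.

Lemma outward_spanning_tree_dst_neq_root e : e \in T -> dst e != r.
Proof.
have [cardT _ in_deg1] := tree.
move=> eT; apply/eqP => dst_e.
have img v : v \in dst @: T.
  case: (eqVneq v r) => [->|vr]; first by rewrite -dst_e imset_f.
  have /eqP/cards1P [e' He'] := in_deg1 v vr.
  have : e' \in [set e0 in T | dst e0 == v] by rewrite He' set11.
  by rewrite inE => /andP [e'T /eqP <-]; rewrite imset_f.
have n_gt0 : (0 < n)%N := leq_ltn_trans (leq0n r) (ltn_ord r).
have : (#|'I_n| <= #|dst @: T|)%N.
  by apply/subset_leq_card/fintype.subsetP => v _; apply: img.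
rewrite card_ord => /leq_trans /(_ (leq_imset_card dst T)).
by rewrite cardT leqNgt ltn_predL n_gt0.
Qed.

Lemma outward_spanning_tree_dst_inj : {in T &, injective dst}.
Proof.
have [_ _ in_deg1] := tree.
move=> e e' eT e'T de.
have /eqP/cards1P [x Hx] := in_deg1 _ (outward_spanning_tree_dst_neq_root eT).
have in_x e0 : e0 \in T -> dst e0 = dst e -> e0 = x.
  by move=> e0T de0; apply/set1P; rewrite -Hx inE e0T de0 eqxx.
by rewrite (in_x e eT erefl) (in_x e' e'T (esym de)).
Qed.
End OutwardSpanningTree.

Lemma nondecreasing_times (R : realType) p (t : 'I_p.+1 -> R) :
  (forall j, tj t j <= tnext t j) -> {homo t : u v / (u <= v)%N >-> u <= v}.
Proof.
move=> step u v uv; rewrite -(inord_val u) -(inord_val v).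
apply: (Order.NatMonotonyTheory.nondecn_inP (D := [pred x | (x <= p)%N])
          (f := fun x => t (inord x))).
- by move=> x y _ yp z /andP [_ zy]; rewrite inE (leq_trans (ltnW zy) yp).
- move=> x _; rewrite inE => xp; have := step (Ordinal xp); rewrite /tj /tnext.
  by congr (t _ <= t _); apply: val_inj; rewrite /= inordK // ltnS ltnW.
- by rewrite inE -ltnS ltn_ord.
- by rewrite inE -ltnS ltn_ord.
- exact: uv.
Qed.

Section SwitchingInterval.
Variables (R : realType) (p m : nat) (src dst : 'I_m -> 'I_p.+1).
Variables (omega : 'cV[R]_p.+1) (r : 'I_p.+1) (g : 'I_p -> 'I_m) (k k2 c0 : R).
Variables (t : 'I_p.+1 -> R) (theta : R -> 'cV[R]_p.+1) (F : seq R).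

Hypothesis no_loops : no_self_loops src dst.
Hypothesis dst_g_neq_root : forall j, dst (g j) != r.
Hypothesis dst_g_inj : injective (fun j => dst (g j)).
Hypothesis t_nondecr : {homo t : u v / (u <= v)%N >-> u <= v}.
Hypothesis t0_gt0 : 0 < t ord0.
Hypothesis k2_ge0 : 0 <= k2.
Hypothesis theta_cont :
  forall s, 0 < s -> forall i, {for s, continuous (fun u => theta u i ord0)}.
Hypothesis theta_derive : forall s, 0 < s -> s \notin F -> forall i,
  is_derive s 1 (fun u => theta u i ord0)
    (omega i ord0 + control src dst k k2 r g t theta s i ord0).
Hypothesis consensus : omega + k *: yt src dst theta (t ord0) = const_mx c0.

Local Notation beta := (betat src dst theta).

Lemma tj_le_tnext j : tj t j <= tnext t j.
Proof. exact: (@t_nondecr (widen_ord (leqnSn p) j) (lift ord0 j) (leqnSn j)). Qed.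

Lemma t0_le_tj j : t ord0 <= tj t j.
Proof. exact: (@t_nondecr ord0 (widen_ord (leqnSn p) j) (leq0n j)). Qed.

Lemma tj_gt0 j : 0 < tj t j.
Proof. exact: lt_le_trans t0_gt0 (t0_le_tj j). Qed.

Lemma control_on_interval j s i : s \in `[tj t j, tnext t j[ ->
  control src dst k k2 r g t theta s i ord0
  = k * yt src dst theta (t ord0) i ord0
    + (i == dst (g j))%:R * (k2 * Num.sg (beta s (g j) ord0)).
Proof.
rewrite in_itv /= => /andP [js sj].
have t0s : t ord0 <= s := le_trans (t0_le_tj j) js.
have off j' : j' != j -> ~~ ((tj t j' <= s) && (s < tnext t j')).
  move=> j'j; apply/negP => /andP [j's sj'].
  case: (ltngtP j' j) j'j => [lt_j'j | lt_jj' | /val_inj ->]; last by rewrite eqxx.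
  - have := @t_nondecr (lift ord0 j') (widen_ord (leqnSn p) j) lt_j'j.
    by move=> le_t; have := lt_le_trans (lt_le_trans sj' le_t) js; rewrite ltxx.
  - have := @t_nondecr (lift ord0 j) (widen_ord (leqnSn p) j') lt_jj'.
    by move=> le_t; have := lt_le_trans (lt_le_trans sj le_t) j's; rewrite ltxx.
rewrite /control mxE ltNge t0s /=.
case: pickP => [j' /eqP dj' | none]; case: (eqVneq i (dst (g j))) => [ij | nij].
- have j'j : j' = j by apply: dst_g_inj; rewrite /= dj'.
  by rewrite j'j ij dst_g_neq_root js sj mul1r.
- have j'j : j' != j by apply: contraNneq nij => <-; rewrite dj'.
  by rewrite -andbA (negbTE (off j' j'j)) andbF mul0r addr0.
- by have := none j; rewrite /= ij eqxx.
- by rewrite mul0r addr0.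
Qed.

Lemma theta_derive_on_interval j s i : s \in `]tj t j, tnext t j[ -> s \notin F ->
  is_derive s 1 (fun u => theta u i ord0)
    (c0 + (i == dst (g j))%:R * (k2 * Num.sg (beta s (g j) ord0))).
Proof.
rewrite in_itv /= => /andP [js sj] sF.
have consensus_i : omega i ord0 + k * yt src dst theta (t ord0) i ord0 = c0.
  by have := congr1 (fun M : 'cV[R]_p.+1 => M i ord0) consensus; rewrite !mxE.
have := theta_derive (lt_trans (tj_gt0 j) js) sF i.
by rewrite (control_on_interval (j := j)) ?addrA ?consensus_i // in_itv /= (ltW js) sj.
Qed.

Lemma betat_edge_vanishes j :
  `|beta (tj t j) (g j) ord0| <= k2 * (tnext t j - tj t j) ->
  beta (tnext t j) (g j) ord0 = 0.
Proof.
set a := tj t j; set b := tnext t j; set q := src (g j); set i := dst (g j).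
have betaE u : beta u (g j) ord0 = theta u q ord0 - theta u i ord0.
  by rewrite /betat trBmx_mulE.
rewrite !betaE => beta_a_le.
apply: (sg_flow_vanishes (f := fun u => theta u q ord0 - theta u i ord0) (F := F) k2_ge0
          (tj_le_tnext j)) => // [s|s sab sF].
- rewrite in_itv /= => /andP [as_ _]; have s_pos := lt_le_trans (tj_gt0 j) as_.
  by apply: continuousB; apply: theta_cont.
- have := is_deriveB (theta_derive_on_interval q sab sF) (theta_derive_on_interval i sab sF).
  by rewrite (negbTE (no_loops (g j))) eqxx mul0r mul1r addr0 betaE opprD addNKr.
Qed.

Lemma theta_interval_step j :
  `|beta (tj t j) (g j) ord0| <= k2 * (tnext t j - tj t j) ->
  theta (tnext t j) = theta (tj t j) + const_mx (c0 * (tnext t j - tj t j))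
                      + beta (tj t j) (g j) ord0 *: delta_mx (dst (g j)) ord0.
Proof.
move=> gap; have := betat_edge_vanishes gap.
rewrite /betat !trBmx_mulE.
set a := tj t j; set b := tnext t j; set q := src (g j); set i := dst (g j) => edge.
have cont l s : s \in `[a, b] -> {for s, continuous (fun u => theta u l ord0)}.
  by rewrite in_itv /= => /andP [as_ _]; apply: theta_cont (lt_le_trans (tj_gt0 j) as_) l.
have off_i l : l != i -> theta b l ord0 = theta a l ord0 + c0 * (b - a).
  move=> li; apply (derive_cst_off_seq_affine (F := F) (tj_le_tnext j) (cont l)) => s sab sF.
  by have := theta_derive_on_interval l sab sF; rewrite (negbTE li) mul0r addr0.
apply/matrixP => l o; rewrite (ord1 o) !mxE.
case: (eqVneq l i) => [->|li]; last by rewrite off_i // mulr0 addr0.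
have := off_i q (no_loops (g j)); rewrite eqxx mulr1; lra.
Qed.

Lemma betat_interval_step j :
  `|beta (tj t j) (g j) ord0| <= k2 * (tnext t j - tj t j) ->
  beta (tnext t j)
    = (1%:M + (Bmx R src dst)^T *m Dmx R dst *m Emx R (g j)) *m beta (tj t j).
Proof.
move=> gap; rewrite [LHS]/betat (theta_interval_step gap).
rewrite !mulmxDr trBmx_mul_const addr0 mulmxDl mul1mx -!mulmxA Dmx_Emx_mul.
by rewrite -!scalemxAr.
Qed.
End SwitchingInterval.

(* nodes 'I_p.+1 (paper: n = p+1), edges 'I_m *)
Theorem lemma2 (R : realType) (p m : nat) (src dst : 'I_m -> 'I_p.+1)
  (z : 'cV[R]_p.+1) (Qdd : 'M[R]_p.+1) (omega : 'cV[R]_p.+1)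
  (T : {set 'I_m}) (r : 'I_p.+1) (g : 'I_p -> 'I_m) (k k2 : R)
  (t : 'I_p.+1 -> R) (theta : R -> 'cV[R]_p.+1) :
  no_self_loops src dst ->
  strongly_connected src dst ->
  (forall i, 0 < z i ord0) ->
  z^T *m Qmx R src dst = 0 ->
  const_mx 1 *m z = 1%:M ->
  is_Qddagger z (Qmx R src dst) Qdd ->
  outward_spanning_tree src dst T r ->
  injective g -> [set g a | a : 'I_p] = T ->
  (forall a b : 'I_p, tree_prec src dst T (g a) (g b) -> (a < b)%N) ->
  0 < k -> 0 < k2 ->
  0 < t ord0 ->
  (forall j, tj t j < tnext t j) ->
  (forall j, `|betat src dst theta (tj t j) (g j) ord0| / k2 < tnext t j - tj t j) ->
  solves omega (control src dst k k2 r g t theta) theta ->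
  betat src dst theta (t ord0) = - k^-1 *: ((Bmx R src dst)^T *m Qdd *m omega) ->
  omega + k *: yt src dst theta (t ord0) = Wmx z *m omega ->
  forall j : 'I_p,
    betat src dst theta (tnext t j)
      = (1%:M + (Bmx R src dst)^T *m Dmx R dst *m Emx R (g j))
          *m betat src dst theta (tj t j)
    /\ betat src dst theta (tnext t j) (g j) ord0 = 0.
Proof.
move=> no_loops _ _ _ _ _ tree g_inj g_T _ _ k2_gt0 t0_gt0 t_step t_gap
  [theta_cont [F theta_derive]] _ consensus j.
have gT j' : g j' \in T by rewrite -g_T imset_f.
have dst_g_inj : injective (fun j' => dst (g j')).
  by move=> j1 j2 /(outward_spanning_tree_dst_inj tree (gT j1) (gT j2)) /g_inj.
have dst_g_neq_root j' : dst (g j') != r := outward_spanning_tree_dst_neq_root tree (gT j').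
have t_nondecr := nondecreasing_times (fun j' => ltW (t_step j')).
have gap : `|betat src dst theta (tj t j) (g j) ord0| <= k2 * (tnext t j - tj t j).
  by rewrite -ler_pdivrMl // mulrC ltW.
rewrite Wmx_mul in consensus.
split.
- exact: (betat_interval_step no_loops dst_g_neq_root dst_g_inj t_nondecr t0_gt0
            (ltW k2_gt0) theta_cont theta_derive consensus gap).
- exact: (betat_edge_vanishes no_loops dst_g_neq_root dst_g_inj t_nondecr t0_gt0
            (ltW k2_gt0) theta_cont theta_derive consensus gap).
Qed.
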